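(* Let $(M_I,\triangleright)$ and $(N_J,\triangleright)$ be factor systems. Then their function space $[M_I\to N_J]$ is a factor system. Moreover: (1) If the relations $\triangleright$ on $N_J$ satisfy (Fun), resp. (Stab), then so do the relations $\triangleright$ on $[M_I\to N_J]$. (2) If $M_I$ is inverse and $N_J$ is direct, then $[M_I\to N_J]$ is direct. (3) If $M_I$ is direct and $N_J$ is inverse, then $[M_I\to N_J]$ is inverse.
   Context: Let $(I,\le)$ be a non-empty directed preordered set. A system $(M_I,\triangleright)$ consists of sets $M_i$ ($i\in I$, regarded as pairwise disjoint) and, for $i\le i'$, relations $\triangleright\subseteq M_{i'}\times M_i$ (written $a_{i'}\triangleright a_i$), reflexive when $i=i'$. Elements $a_i\in M_i$, $b_j\in M_j$ are consistent, $a_i\approx b_j$, iff there are $i'\ge i,j$ and $c\in M_{i'}$ with $c\triangleright a_i$ and $c\triangleright b_j$. A prefactor system is a system with $a_{i'}\approx a_i\iff a_{i'}\triangleright a_i$ for all $i\le i'$. Condition (Fun): for all $i$ and $a_i,b_i\in M_i$, $a_i\approx b_i\iff a_i\triangleright b_i\iff a_i=b_i$. Condition (Stab): for all $i\le i'$, $a_{i'}\in M_{i'}$, $a_i,b_i\in M_i$: $a_{i'}\triangleright a_i$ and $a_i\approx b_i$ imply $a_{i'}\triangleright b_i$. $\approx$-embeddings: $\approx$-preserving maps $emb_{i,i'}:M_i\to M_{i'}$ ($i\le i'$) with $emb_{i,i}(a)\approx a$, $emb_{i',i''}(emb_{i,i'}(a))\approx emb_{i,i''}(a)$; coherent if $a_{i'}\triangleright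 a_i\Rightarrow emb_{i',i''}(a_{i'})\triangleright a_i$ for $i\le i'\le i''$. $\approx$-projections: $\approx$-preserving maps $proj_{i',i}:M_{i'}\to M_i$ with $proj_{i,i}(a)\approx a$, $proj_{i',i}(proj_{i'',i'}(a))\approx proj_{i'',i}(a)$; coherent if $a_{i''}\triangleright a_i\Rightarrow proj_{i'',i'}(a_{i''})\triangleright a_i$ for $i\le i'\le i''$. They form an $\approx$-embedding-projection pair if $proj_{i',i}(emb_{i,i'}(a))\approx a$. A factor system is a prefactor system with a coherent $\approx$-embedding-projection pair. A prefactor system is direct iff it has coherent $\approx$-embeddings with $a_{i'}\triangleright a_i\iff a_{i'}\approx emb_{i,i'}(a_i)$; inverse iff it has coherent $\approx$-projections with $a_{i'}\triangleright a_i\iff proj_{i',i}(a_{i'})\approx a_i$. Function space: for factor systems $M_I,N_J$, $[M_I\to N_J]$ is indexed by $I\times J$ with the product order, an index written $i\to j$; its state $[M_i\to N_j]$ is the set of all total functions $f:M_i\to N_j$ with $a\approx b\Rightarrow f(a)\approx f(b)$. For $i\to j\le i'\to j'$, $f'\triangleright f$ iff for all $a_{i'}\in M_{i'}$, $a_i\in M_i$ with $a_{i'}\triangleright a_i$ we have $f'(a_{i'})\triangleright f(a_i)$. Embeddings $emb_{i\to j,i'\to j'}(f)=emb_{j,j'}\circ f\circ proj_{i',i}$ and projections $proj_{i'\to j',i\to j}(f')=proj_{j',j}\circ f'\circ emb_{i,i'}$. *)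

Set Implicit Arguments.
Unset Strict Implicit.

Record dpreorder := DPreorder {
  idx :> Type;
  le : idx -> idx -> Prop;
  le_refl : forall i, le i i;
  le_trans : forall i j k, le i j -> le j k -> le i k;
  le_directed : forall i j, exists k, le i k /\ le j k;
  idx_inhabited : inhabited idx }.

(** Data of a system: states M_i (a dependent family, hence pairwise disjoint)
    and relations rel a' a  (read  a' |> a ), meaningful for i <= i'. *)
Record sysdata (I : dpreorder) := SysData {
  st : I -> Type;
  rel : forall i i' : I, st i' -> st i -> Prop }.
Arguments st {I} s i.
Arguments rel {I} s {i i'} _ _.
Arguments le : clear implicits.

Section Sys.
Context {I : dpreorder} (S : sysdata I).

Definition cons {i j : I} (a : st S i) (b : st S j) : Prop :=
  exists (i' : I) (c : st S i'), le I i i' /\ le I j i' /\ rel S c a /\ rel S c b.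

Definition is_system : Prop := forall i (a : st S i), rel S a a.

Definition prefactor : Prop :=
  is_system /\
  forall (i i' : I), le I i i' -> forall (a' : st S i') (a : st S i),
    cons a' a <-> rel S a' a.

Definition Fun : Prop :=
  forall i (a b : st S i), (cons a b <-> rel S a b) /\ (rel S a b <-> a = b).

Definition Stab : Prop :=
  forall (i i' : I), le I i i' -> forall (a' : st S i') (a b : st S i),
    rel S a' a -> cons a b -> rel S a' b.

Definition emb_family := forall i i' : I, le I i i' -> st S i -> st S i'.
Definition proj_family := forall i i' : I, le I i i' -> st S i' -> st S i.

Definition is_embeddings (emb : emb_family) : Prop :=
  (forall i i' (H : le I i i') (a b : st S i), cons a b -> cons (emb i i' H a) (emb i i' H b)) /\
  (forall i (H : le I i i) (a : st S i), cons (emb i i H a) a) /\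
  (forall i i' i'' (H1 : le I i i') (H2 : le I i' i'') (H3 : le I i i'') (a : st S i),
     cons (emb i' i'' H2 (emb i i' H1 a)) (emb i i'' H3 a)).

Definition coherent_emb (emb : emb_family) : Prop :=
  forall i i' i'' (H1 : le I i i') (H2 : le I i' i'') (a' : st S i') (a : st S i),
    rel S a' a -> rel S (emb i' i'' H2 a') a.

Definition is_projections (proj : proj_family) : Prop :=
  (forall i i' (H : le I i i') (a b : st S i'), cons a b -> cons (proj i i' H a) (proj i i' H b)) /\
  (forall i (H : le I i i) (a : st S i), cons (proj i i H a) a) /\
  (forall i i' i'' (H1 : le I i i') (H2 : le I i' i'') (H3 : le I i i'') (a : st S i''),
     cons (proj i i' H1 (proj i' i'' H2 a)) (proj i i'' H3 a)).

Definition coherent_proj (proj : proj_family) : Prop :=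
  forall i i' i'' (H1 : le I i i') (H2 : le I i' i'') (a'' : st S i'') (a : st S i),
    rel S a'' a -> rel S (proj i' i'' H2 a'') a.

Definition factor : Prop :=
  prefactor /\
  exists (emb : emb_family) (proj : proj_family),
    is_embeddings emb /\ coherent_emb emb /\
    is_projections proj /\ coherent_proj proj /\
    (forall i i' (H : le I i i') (a : st S i), cons (proj i i' H (emb i i' H a)) a).

Definition direct : Prop :=
  prefactor /\
  exists emb : emb_family, is_embeddings emb /\ coherent_emb emb /\
    forall i i' (H : le I i i') (a' : st S i') (a : st S i),
      rel S a' a <-> cons a' (emb i i' H a).

Definition inverse : Prop :=
  prefactor /\
  exists proj : proj_family, is_projections proj /\ coherent_proj proj /\
    forall i i' (H : le I i i') (a' : st S i') (a : st S i),
      rel S a' a <-> cons (proj i i' H a') a.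

End Sys.
Arguments cons {I} S {i j} _ _.

Definition prod_dpreorder (I J : dpreorder) : dpreorder.
Proof.
  refine (@DPreorder (idx I * idx J)
            (fun p q => le I (fst p) (fst q) /\ le J (snd p) (snd q)) _ _ _ _).
  - intros [i j]; split; apply le_refl.
  - intros [i j] [i' j'] [i'' j''] [H1 H2] [H3 H4]; split; eapply le_trans; eauto.
  - intros [i j] [i' j'].
    destruct (le_directed i i') as [k [Hk1 Hk2]].
    destruct (le_directed j j') as [l [Hl1 Hl2]].
    exists (k, l); simpl; tauto.
  - destruct (idx_inhabited I) as [i]; destruct (idx_inhabited J) as [j];
      exact (inhabits (i, j)).
Defined.

Definition fs_st {I J : dpreorder} (M : sysdata I) (N : sysdata J)
  (p : prod_dpreorder I J) : Type :=
  { f : st M (fst p) -> st N (snd p) |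
    forall a b : st M (fst p), cons M a b -> cons N (f a) (f b) }.

Definition fs_rel {I J : dpreorder} (M : sysdata I) (N : sysdata J)
  (p p' : prod_dpreorder I J) (f' : fs_st M N p') (f : fs_st M N p) : Prop :=
  forall (a' : st M (fst p')) (a : st M (fst p)),
    rel M a' a -> rel N (proj1_sig f' a') (proj1_sig f a).

Definition fun_space {I J : dpreorder} (M : sysdata I) (N : sysdata J)
  : sysdata (prod_dpreorder I J) :=
  @SysData (prod_dpreorder I J) (fs_st M N) (@fs_rel I J M N).

(** States of [[M_I -> N_J]] preserve the relation of [N] at each fixed index,
    which is an equivalence, so two states at a common index are related as
    soon as they are related pointwise. Embeddings and projections of the
    function space are the conjugations [emb ∘ f ∘ proj] and [proj ∘ f ∘ emb];
    each of their defining properties thus reduces pointwise to the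
    corresponding properties of [M] and [N]. Consistent states are related
    because their common upper bound can be evaluated on a common embedding
    of the arguments. *)

From Stdlib Require Import FunctionalExtensionality ProofIrrelevance.
Set Implicit Arguments.

Section Prefactor.
Context {I : dpreorder} (S : sysdata I) (HS : prefactor S).

Lemma prefactor_rel_refl {i} (a : st S i) : rel S a a.
Proof. exact (proj1 HS i a). Qed.

Lemma prefactor_cons_rel {i} (a b : st S i) : cons S a b <-> rel S a b.
Proof. exact (proj2 HS i i (le_refl i) a b). Qed.

Lemma prefactor_rel_sym {i} {a b : st S i} : rel S a b -> rel S b a.
Proof.
  intros Hab; apply prefactor_cons_rel.
  exists i, a; repeat split; auto using le_refl, prefactor_rel_refl.
Qed.

Lemma prefactor_rel_trans {i} {a b c : st S i} : rel S a b -> rel S b c -> rel S a c.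
Proof.
  intros Hab Hbc; apply prefactor_cons_rel.
  exists i, b; repeat split; auto using le_refl, prefactor_rel_sym.
Qed.

Lemma embeddings_rel_id (emb : emb_family S) : is_embeddings emb ->
  forall i (H : le I i i) (a : st S i), rel S (emb i i H a) a.
Proof. intros Hemb i H a; apply prefactor_cons_rel, Hemb. Qed.

Lemma embeddings_rel_comp (emb : emb_family S) : is_embeddings emb ->
  forall i i' i'' (H1 : le I i i') (H2 : le I i' i'') (H3 : le I i i'') (a : st S i),
    rel S (emb i' i'' H2 (emb i i' H1 a)) (emb i i'' H3 a).
Proof. intros Hemb i i' i'' H1 H2 H3 a; apply prefactor_cons_rel, Hemb. Qed.

Lemma projections_rel_id (proj : proj_family S) : is_projections proj ->
  forall i (H : le I i i) (a : st S i), rel S (proj i i H a) a.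
Proof. intros Hproj i H a; apply prefactor_cons_rel, Hproj. Qed.

Lemma projections_rel_comp (proj : proj_family S) : is_projections proj ->
  forall i i' i'' (H1 : le I i i') (H2 : le I i' i'') (H3 : le I i i'') (a : st S i''),
    rel S (proj i i' H1 (proj i' i'' H2 a)) (proj i i'' H3 a).
Proof. intros Hproj i i' i'' H1 H2 H3 a; apply prefactor_cons_rel, Hproj. Qed.

End Prefactor.

Definition preserves_cons {I J : dpreorder} {S : sysdata I} {T : sysdata J} {i j}
  (g : st S i -> st T j) : Prop :=
  forall a b, cons S a b -> cons T (g a) (g b).

Lemma preserves_cons_id {I : dpreorder} (S : sysdata I) i :
  preserves_cons (fun a : st S i => a).
Proof. exact (fun a b Hab => Hab). Qed.

Lemma preserves_rel {I J : dpreorder} (S : sysdata I) (T : sysdata J)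
  (HS : prefactor S) (HT : prefactor T) {i j} {g : st S i -> st T j} :
  preserves_cons g -> forall a b, rel S a b -> rel T (g a) (g b).
Proof.
  intros Hg a b Hab; apply (prefactor_cons_rel HT), Hg, (prefactor_cons_rel HS), Hab.
Qed.

Section FunctionSpace.
Context {I J : dpreorder} (M : sysdata I) (N : sysdata J)
  (HM : prefactor M) (HN : prefactor N).

Notation P := (prod_dpreorder I J).
Notation F := (fun_space M N).

Lemma fs_app_rel (p : P) (f : st F p) (a b : st M (fst p)) :
  rel M a b -> rel N (proj1_sig f a) (proj1_sig f b).
Proof. exact (preserves_rel HM HN (proj2_sig f) a b). Qed.

Lemma fs_rel_refl (p : P) (f : st F p) : rel F f f.
Proof. exact (fs_app_rel f). Qed.

Lemma fs_rel_pointwise (p : P) (f g : st F p) :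
  (forall a, rel N (proj1_sig f a) (proj1_sig g a)) -> rel F f g.
Proof.
  intros Hfg a' a Ha.
  apply (prefactor_rel_trans HN (Hfg a')), fs_app_rel, Ha.
Qed.

Lemma fs_conj_rel {p : P} {f g : st F p} {X : Type} {j' : J}
  {pre pre' : X -> st M (fst p)} {post post' : st N (snd p) -> st N j'} :
  preserves_cons post' ->
  (forall x, rel M (pre x) (pre' x)) -> (forall y, rel N (post y) (post' y)) ->
  rel F f g -> forall x, rel N (post (proj1_sig f (pre x))) (post' (proj1_sig g (pre' x))).
Proof.
  intros Hpost' Hpre Hpost Hfg x.
  apply (prefactor_rel_trans HN (Hpost _)), (preserves_rel HN HN Hpost').
  apply Hfg, Hpre.
Qed.

Lemma fs_prefactor (eM : emb_family M) : coherent_emb eM -> prefactor F.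
Proof.
  intros ceM; split; [exact fs_rel_refl |].
  intros p p' Hp f' f; split.
  - intros (p'' & g & Hp' & Hp'' & Hgf' & Hgf) a' a Ha.
    set (a'' := eM _ _ (proj1 Hp') a').
    assert (Ha''a' : rel M a'' a') by apply (ceM _ _ _ (le_refl _)), prefactor_rel_refl, HM.
    assert (Ha''a : rel M a'' a) by apply (ceM _ _ _ (proj1 Hp)), Ha.
    apply (proj2 HN _ _ (proj2 Hp)).
    exists (snd p''), (proj1_sig g a''); repeat split.
    + exact (proj2 Hp').
    + exact (proj2 Hp'').
    + exact (Hgf' _ _ Ha''a').
    + exact (Hgf _ _ Ha''a).
  - intros Hf'f; exists p', f'.
    split; [apply le_refl | split; [exact Hp | split; [apply fs_rel_refl | exact Hf'f]]].
Qed.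

Section Factor.
Hypothesis HF : prefactor F.

Lemma fs_Fun : Fun N -> Fun F.
Proof.
  intros HfunN p f g; split; [apply (prefactor_cons_rel HF) |]; split.
  - intros Hfg; apply eq_sig_hprop; [intros; apply proof_irrelevance |].
    apply functional_extensionality; intros a.
    apply HfunN, Hfg, (prefactor_rel_refl HM).
  - intros <-; apply fs_rel_refl.
Qed.

Lemma fs_Stab : Stab N -> Stab F.
Proof.
  intros HstabN p p' Hp f' f g Hf'f Hfg a' a Ha.
  apply (prefactor_cons_rel HF) in Hfg.
  apply (HstabN _ _ (proj2 Hp) _ (proj1_sig f a)); [exact (Hf'f _ _ Ha) |].
  apply (prefactor_cons_rel HN), Hfg, (prefactor_rel_refl HM).
Qed.

Definition fs_map {p p' : P}
  {pre : st M (fst p') -> st M (fst p)} {post : st N (snd p) -> st N (snd p')}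
  (Hpre : preserves_cons pre) (Hpost : preserves_cons post) (f : st F p) : st F p' :=
  exist (fun g => preserves_cons g) (fun a => post (proj1_sig f (pre a)))
    (fun a b Hab => Hpost _ _ (proj2_sig f _ _ (Hpre _ _ Hab))).

Section EmbeddingsProjections.
Variables (eM : emb_family M) (pM : proj_family M) (eN : emb_family N) (pN : proj_family N).
Hypotheses (HeM : is_embeddings eM) (HpM : is_projections pM)
  (HeN : is_embeddings eN) (HpN : is_projections pN).

Definition fs_emb : emb_family F :=
  fun p p' Hp => fs_map (proj1 HpM _ _ (proj1 Hp)) (proj1 HeN _ _ (proj2 Hp)).

Definition fs_proj : proj_family F :=
  fun p p' Hp => fs_map (proj1 HeM _ _ (proj1 Hp)) (proj1 HpN _ _ (proj2 Hp)).

Lemma fs_emb_embeddings : is_embeddings fs_emb.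
Proof.
  split; [| split].
  - intros p p' Hp f g Hfg; apply (prefactor_cons_rel HF) in Hfg.
    apply (prefactor_cons_rel HF), fs_rel_pointwise; intros a; cbn.
    apply fs_conj_rel; auto using prefactor_rel_refl; exact (proj1 HeN _ _ _).
  - intros p Hp f; apply (prefactor_cons_rel HF), fs_rel_pointwise; intros a; cbn.
    apply (fs_conj_rel (pre' := fun x => x) (post' := fun y => y));
      auto using fs_rel_refl, preserves_cons_id, embeddings_rel_id, projections_rel_id.
  - intros p p' p'' Hp Hp' Hp'' f.
    apply (prefactor_cons_rel HF), fs_rel_pointwise; intros a; cbn.
    apply (fs_conj_rel (pre := fun x => pM _ _ _ (pM _ _ _ x))
                       (post := fun y => eN _ _ _ (eN _ _ _ y)));
      auto using fs_rel_refl, embeddings_rel_comp, projections_rel_comp.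
    exact (proj1 HeN _ _ _).
Qed.

Lemma fs_proj_projections : is_projections fs_proj.
Proof.
  split; [| split].
  - intros p p' Hp f g Hfg; apply (prefactor_cons_rel HF) in Hfg.
    apply (prefactor_cons_rel HF), fs_rel_pointwise; intros a; cbn.
    apply fs_conj_rel; auto using prefactor_rel_refl; exact (proj1 HpN _ _ _).
  - intros p Hp f; apply (prefactor_cons_rel HF), fs_rel_pointwise; intros a; cbn.
    apply (fs_conj_rel (pre' := fun x => x) (post' := fun y => y));
      auto using fs_rel_refl, preserves_cons_id, embeddings_rel_id, projections_rel_id.
  - intros p p' p'' Hp Hp' Hp'' f.
    apply (prefactor_cons_rel HF), fs_rel_pointwise; intros a; cbn.
    apply (fs_conj_rel (pre := fun x => eM _ _ _ (eM _ _ _ x))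
                       (post := fun y => pN _ _ _ (pN _ _ _ y)));
      auto using fs_rel_refl, embeddings_rel_comp, projections_rel_comp.
    exact (proj1 HpN _ _ _).
Qed.

Lemma fs_emb_coherent : coherent_emb eN -> coherent_proj pM -> coherent_emb fs_emb.
Proof.
  intros ceN cpM p p' p'' Hp Hp' f' f Hf'f a'' a Ha.
  apply (ceN _ _ _ (proj2 Hp)), Hf'f, (cpM _ _ _ (proj1 Hp)), Ha.
Qed.

Lemma fs_proj_coherent : coherent_proj pN -> coherent_emb eM -> coherent_proj fs_proj.
Proof.
  intros cpN ceM p p' p'' Hp Hp' f'' f Hf''f a' a Ha.
  apply (cpN _ _ _ (proj2 Hp)), Hf''f, (ceM _ _ _ (proj1 Hp)), Ha.
Qed.

Lemma fs_proj_emb :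
  (forall i i' (H : le I i i') (a : st M i), cons M (pM i i' H (eM i i' H a)) a) ->
  (forall j j' (H : le J j j') (b : st N j), cons N (pN j j' H (eN j j' H b)) b) ->
  forall p p' (H : le P p p') (f : st F p), cons F (fs_proj H (fs_emb H f)) f.
Proof.
  intros epM epN p p' Hp f; apply (prefactor_cons_rel HF), fs_rel_pointwise; intros a; cbn.
  apply (fs_conj_rel (pre := fun x => pM _ _ _ (eM _ _ _ x)) (pre' := fun x => x)
                     (post := fun y => pN _ _ _ (eN _ _ _ y)) (post' := fun y => y));
    auto using fs_rel_refl, preserves_cons_id; intros; apply prefactor_cons_rel; auto.
Qed.

Lemma fs_emb_direct :
  (forall i i' (H : le I i i') (a' : st M i') (a : st M i),
     rel M a' a <-> cons M (pM i i' H a') a) ->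
  (forall j j' (H : le J j j') (b' : st N j') (b : st N j),
     rel N b' b <-> cons N b' (eN j j' H b)) ->
  forall p p' (H : le P p p') (f' : st F p') (f : st F p),
    rel F f' f <-> cons F f' (fs_emb H f).
Proof.
  intros invM dirN p p' Hp f' f; split.
  - intros Hf'f; apply (prefactor_cons_rel HF), fs_rel_pointwise; intros a; cbn.
    assert (Ha : rel M a (pM _ _ (proj1 Hp) a))
      by apply (invM _ _ (proj1 Hp)), (prefactor_cons_rel HM), (prefactor_rel_refl HM).
    apply (prefactor_cons_rel HN), dirN, (Hf'f _ _ Ha).
  - intros Hf'emb%(prefactor_cons_rel HF) a' a Ha.
    apply (dirN _ _ (proj2 Hp)), (prefactor_cons_rel HN).
    apply (prefactor_rel_trans HN (Hf'emb a' a' (prefactor_rel_refl HM a'))); cbn.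
    apply (preserves_rel HN HN (proj1 HeN _ _ _)), fs_app_rel.
    apply (prefactor_cons_rel HM), invM, Ha.
Qed.

Lemma fs_proj_inverse :
  (forall i i' (H : le I i i') (a' : st M i') (a : st M i),
     rel M a' a <-> cons M a' (eM i i' H a)) ->
  (forall j j' (H : le J j j') (b' : st N j') (b : st N j),
     rel N b' b <-> cons N (pN j j' H b') b) ->
  forall p p' (H : le P p p') (f' : st F p') (f : st F p),
    rel F f' f <-> cons F (fs_proj H f') f.
Proof.
  intros dirM invN p p' Hp f' f; split.
  - intros Hf'f; apply (prefactor_cons_rel HF), fs_rel_pointwise; intros a; cbn.
    assert (Ha : rel M (eM _ _ (proj1 Hp) a) a)
      by apply (dirM _ _ (proj1 Hp)), (prefactor_cons_rel HM), (prefactor_rel_refl HM).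
    apply (prefactor_cons_rel HN), invN, (Hf'f _ _ Ha).
  - intros Hprojf'%(prefactor_cons_rel HF) a' a Ha.
    apply (invN _ _ (proj2 Hp)), (prefactor_cons_rel HN).
    refine (prefactor_rel_trans HN _ (Hprojf' a a (prefactor_rel_refl HM a))); cbn.
    apply (preserves_rel HN HN (proj1 HpN _ _ _)), fs_app_rel.
    apply (prefactor_cons_rel HM), dirM, Ha.
Qed.

End EmbeddingsProjections.
End Factor.
End FunctionSpace.

Theorem proposition2p7 (I J : dpreorder) (M : sysdata I) (N : sysdata J) :
  factor M -> factor N ->
  factor (fun_space M N) /\
  (Fun N -> Fun (fun_space M N)) /\
  (Stab N -> Stab (fun_space M N)) /\
  (inverse M -> direct N -> direct (fun_space M N)) /\
  (direct M -> inverse N -> inverse (fun_space M N)).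
Proof.
  intros (HM & eM & pM & HeM & ceM & HpM & cpM & epM)
         (HN & eN & pN & HeN & ceN & HpN & cpN & epN).
  pose proof (fs_prefactor HM HN ceM) as HF.
  split; [| split; [| split; [| split]]].
  - split; [exact HF |].
    exists (fs_emb HpM HeN), (fs_proj HeM HpN).
    split; [apply fs_emb_embeddings; auto |].
    split; [apply fs_emb_coherent; auto |].
    split; [apply fs_proj_projections; auto |].
    split; [apply fs_proj_coherent; auto |].
    apply fs_proj_emb; auto.
  - exact (fs_Fun HM HN HF).
  - exact (fs_Stab HM HN HF).
  - intros (_ & pM' & HpM' & cpM' & invM) (_ & eN' & HeN' & ceN' & dirN).
    split; [exact HF |]; exists (fs_emb HpM' HeN').
    split; [apply fs_emb_embeddings; auto |].
    split; [apply fs_emb_coherent; auto |].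
    apply fs_emb_direct; auto.
  - intros (_ & eM' & HeM' & ceM' & dirM) (_ & pN' & HpN' & cpN' & invN).
    split; [exact HF |]; exists (fs_proj HeM' HpN').
    split; [apply fs_proj_projections; auto |].
    split; [apply fs_proj_coherent; auto |].
    apply fs_proj_inverse; auto.
Qed.
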